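(* If $k$ is odd and $U$ is a $k$-unitrade, then $|U|$ is even.
   Context: A $k$-unitrade on a finite set $V$ is a set $U$ of $k$-element subsets (blocks) of $V$ such that every $(k-1)$-element subset of $V$ is contained in an even number of blocks of $U$. *)

From mathcomp Require Import all_boot.
Set Implicit Arguments. Unset Strict Implicit. Unset Printing Implicit Defensive.

Definition unitrade (V : finType) (k : nat) (U : {set {set V}}) : Prop :=
  (forall B, B \in U -> #|B| = k) /\
  (forall S : {set V}, #|S| = k.-1 ->
     ~~ odd #|[set B in U | S \subset B]|).

From mathcomp Require Import all_boot.

(* Double count the incidences (S, B) with B a block and S a (k-1)-subset of B.
   Each block has k such subsets, so there are k|U| incidences; each S lies in
   an even number of blocks, so the count is even.  For odd k this forces |U|
   to be even. *)

Lemma sum_card_incidence (T1 T2 : finType) (P1 : pred T1) (P2 : pred T2)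
    (r : T1 -> T2 -> bool) :
  \sum_(x | P1 x) #|[set y | P2 y & r x y]| =
  \sum_(y | P2 y) #|[set x | P1 x & r x y]|.
Proof.
under eq_bigr => x _ do rewrite -sum1_card.
rewrite (exchange_big_dep P2) /=; last by move=> x y _; rewrite inE => /andP[].
apply: eq_bigr => y P2y; rewrite -sum1_card; apply: eq_bigl => x.
by rewrite !inE P2y.
Qed.

Lemma card_predn_subsets (T : finType) (B : {set T}) :
  0 < #|B| -> #|[set S : {set T} | #|S| == #|B|.-1 & S \subset B]| = #|B|.
Proof.
move=> B_gt0.
rewrite (_ : [set S | _ & _] = [set S : {set T} | S \subset B & #|S| == #|B|.-1]).
  by rewrite cards_draws; case: #|B| B_gt0 => // n _; rewrite binSn.
by apply/setP => S; rewrite !inE andbC.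
Qed.

Lemma unitrade_mul_even {V : finType} {k : nat} {U : {set {set V}}} :
  0 < k -> unitrade k U -> ~~ odd (#|U| * k).
Proof.
move=> k_gt0 [cardU evenU].
have incidences : \sum_(S : {set V} | #|S| == k.-1) #|[set B in U | S \subset B]|
                  = #|U| * k.
  rewrite sum_card_incidence -sum_nat_const; apply: eq_bigr => B /cardU cardB.
  by rewrite -cardB card_predn_subsets ?cardB.
rewrite -incidences -dvdn2; apply: dvdn_sum => S /eqP /evenU.
by rewrite dvdn2.
Qed.

Theorem proposition11 (V : finType) (k : nat) (U : {set {set V}}) :
  odd k -> unitrade k U -> ~~ odd #|U|.
Proof.
move=> odd_k /(unitrade_mul_even (odd_gt0 odd_k)).
by rewrite oddM odd_k andbT.
Qed.
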